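(* Let $(A_i,\omega_i)$, $i=1,2$, be baric algebras over $K$. Then $A_1\bowtie A_2$ is associative if and only if $xy=(\omega_1\bowtie\omega_2)(y)\,x$ for all $x,y\in A_1\bowtie A_2$.
   Context: A baric algebra over a field $K$ is a pair $(A,\omega)$ where $A$ is a (not necessarily associative) $K$-algebra and $\omega:A\to K$ is a nonzero $K$-algebra homomorphism. For baric algebras $(A_1,\omega_1),(A_2,\omega_2)$, $A_1\bowtie A_2$ denotes the vector space $A_1\oplus A_2$ with product $(a_1,a_2)(b_1,b_2)=(a_1b_1+\omega_2(b_2)a_1,\ a_2b_2+\omega_1(b_1)a_2)$, and $\omega_1\bowtie\omega_2(a_1,a_2)=\omega_1(a_1)+\omega_2(a_2)$. *)

From HB Require Import structures.
From mathcomp Require Import all_boot all_order all_algebra.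
Set Implicit Arguments. Unset Strict Implicit. Unset Printing Implicit Defensive.
Import GRing.Theory.
Local Open Scope ring_scope.

Definition is_algebra_mul (K : fieldType) (A : lmodType K) (mul : A -> A -> A) : Prop :=
  (forall (a : K) (x y z : A), mul (a *: x + y) z = a *: mul x z + mul y z) /\
  (forall (a : K) (x y z : A), mul x (a *: y + z) = a *: mul x y + mul x z).

Definition is_baric (K : fieldType) (A : lmodType K) (mul : A -> A -> A) (w : A -> K) : Prop :=
  [/\ is_algebra_mul mul,
      (forall (a : K) (x y : A), w (a *: x + y) = a * w x + w y),
      (forall x y : A, w (mul x y) = w x * w y) &
      (exists x : A, w x != 0)].

Definition associative_mul (T : Type) (mul : T -> T -> T) : Prop :=
  forall x y z : T, mul x (mul y z) = mul (mul x y) z.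

Definition bowtie_mul (K : fieldType) (A1 A2 : lmodType K)
  (mul1 : A1 -> A1 -> A1) (w1 : A1 -> K)
  (mul2 : A2 -> A2 -> A2) (w2 : A2 -> K) (x y : A1 * A2) : A1 * A2 :=
  (mul1 x.1 y.1 + w2 y.2 *: x.1, mul2 x.2 y.2 + w1 y.1 *: x.2).

Definition bowtie_w (K : fieldType) (A1 A2 : lmodType K)
  (w1 : A1 -> K) (w2 : A2 -> K) (x : A1 * A2) : K :=
  w1 x.1 + w2 x.2.

From HB Require Import structures.
From mathcomp Require Import all_boot all_order all_algebra.
Import GRing.Theory.
Local Open Scope ring_scope.

(* "If": any product of the form  x y = w(y) x  with w homogeneous is
   associative, since both x(yz) and (xy)z equal w(y) w(z) x
   ([scalar_product_associative]); w1 ⋈ w2 is homogeneous because w1, w2 are.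

   "Only if": pick e2 in A2 of weight 1.  Associativity applied to the triple
   (a1,0), (0,e2), (b1,0) yields, on the first component, a1 b1 = w1(b1) a1
   ([bowtie_assoc_mul1]).  The construction ⋈ is symmetric under swapping the
   factors ([bowtie_assoc_swap]), so the same argument gives a2 b2 = w2(b2) a2;
   together these two identities are exactly xy = (w1 ⋈ w2)(y) x. *)

Lemma eq_double0 (V : zmodType) (m : V) : m = m + m -> m = 0.
Proof. by move=> E; apply: (@addrI _ m); rewrite addr0 -E. Qed.

Section BaricFacts.
Context {K : fieldType} {A : lmodType K} {mul : A -> A -> A} {w : A -> K}.
Hypothesis baric : is_baric mul w.

Lemma baric_weight0 : w 0 = 0.
Proof.
case: baric => _ weight_lin _ _; apply: eq_double0.
by have := weight_lin 1 0 0; rewrite scale1r addr0 mul1r.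
Qed.

Lemma baric_weightZ (a : K) (x : A) : w (a *: x) = a * w x.
Proof.
by case: baric => _ weight_lin _ _; rewrite -[a *: x]addr0 weight_lin baric_weight0 addr0.
Qed.

Lemma baric_mul0l (x : A) : mul 0 x = 0.
Proof.
case: baric => [[lin_l _] _ _ _]; apply: eq_double0.
by have := lin_l 1 0 0 x; rewrite scale1r addr0 scale1r.
Qed.

Lemma baric_mul0r (x : A) : mul x 0 = 0.
Proof.
case: baric => [[_ lin_r] _ _ _]; apply: eq_double0.
by have := lin_r 1 x 0 0; rewrite scale1r addr0 scale1r.
Qed.

Lemma baric_weight1 : exists e : A, w e = 1.
Proof.
case: baric => _ _ _ [x wx_neq0].
by exists ((w x)^-1 *: x); rewrite baric_weightZ mulVf.
Qed.

End BaricFacts.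

Lemma scalar_product_associative (K : fieldType) (V : lmodType K)
    (mul : V -> V -> V) (w : V -> K) :
  (forall (a : K) (x : V), w (a *: x) = a * w x) ->
  (forall x y : V, mul x y = w y *: x) -> associative_mul mul.
Proof.
move=> wZ mulE x y z.
by rewrite !mulE wZ scalerA mulrC.
Qed.

Section Bowtie.
Context {K : fieldType} {A1 A2 : lmodType K}.
Context {mul1 : A1 -> A1 -> A1} {w1 : A1 -> K}.
Context {mul2 : A2 -> A2 -> A2} {w2 : A2 -> K}.

Local Notation mul12 := (bowtie_mul mul1 w1 mul2 w2).
Local Notation mul21 := (bowtie_mul mul2 w2 mul1 w1).

Definition swap_pair (x : A1 * A2) : A2 * A1 := (x.2, x.1).

Lemma bowtie_mul_swap (x y : A1 * A2) :
  mul21 (swap_pair x) (swap_pair y) = swap_pair (mul12 x y).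
Proof. by []. Qed.

Lemma bowtie_assoc_swap : associative_mul mul12 -> associative_mul mul21.
Proof.
move=> assoc12 [x2 x1] [y2 y1] [z2 z1].
have := congr1 swap_pair (assoc12 (x1, x2) (y1, y2) (z1, z2)).
by rewrite -!bowtie_mul_swap.
Qed.

Lemma bowtie_wZ : is_baric mul1 w1 -> is_baric mul2 w2 ->
  forall (a : K) (x : A1 * A2), bowtie_w w1 w2 (a *: x) = a * bowtie_w w1 w2 x.
Proof.
move=> baric1 baric2 a x.
by rewrite /bowtie_w (baric_weightZ baric1) (baric_weightZ baric2) mulrDr.
Qed.

(* If A1 ⋈ A2 is associative, then the product of A1 is a1 b1 = w1(b1) a1:
   compare both bracketings of (a1,0) (0,e2) (b1,0) with w2(e2) = 1. *)
Lemma bowtie_assoc_mul1 : is_baric mul1 w1 -> is_baric mul2 w2 ->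
  associative_mul mul12 -> forall a1 b1 : A1, mul1 a1 b1 = w1 b1 *: a1.
Proof.
move=> baric1 baric2 assoc a1 b1.
have [e2 we2] := baric_weight1 baric2.
have := congr1 fst (assoc (a1, 0) (0, e2) (b1, 0)).
rewrite /bowtie_mul /= (baric_weight0 baric2) (baric_mul0r baric2) !add0r.
rewrite (baric_weightZ baric2) we2 mulr1 !(scaler0, scale0r, scale1r, addr0).
by rewrite (baric_mul0l baric1) !(baric_mul0r baric1) !add0r => ->.
Qed.

End Bowtie.

Theorem proposition6p1 (K : fieldType) (A1 A2 : lmodType K)
  (mul1 : A1 -> A1 -> A1) (w1 : A1 -> K)
  (mul2 : A2 -> A2 -> A2) (w2 : A2 -> K)
  (h1 : is_baric mul1 w1) (h2 : is_baric mul2 w2) :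
  associative_mul (bowtie_mul mul1 w1 mul2 w2) <->
  (forall x y : A1 * A2,
     bowtie_mul mul1 w1 mul2 w2 x y = bowtie_w w1 w2 y *: x).
Proof.
split=> [assoc [a1 a2] [b1 b2] | mulE].
- have mul1E := bowtie_assoc_mul1 h1 h2 assoc.
  have mul2E := bowtie_assoc_mul1 h2 h1 (bowtie_assoc_swap assoc).
  by rewrite /bowtie_mul /bowtie_w /= mul1E mul2E -!scalerDl [w2 b2 + _]addrC.
- exact: scalar_product_associative (bowtie_wZ h1 h2) mulE.
Qed.
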